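(* (i) Every invertible linear map $A:\mathcal{F}_p\to\mathcal{F}_p$ (resp. $\mathcal{F}_c\to\mathcal{F}_c$), $f\mapsto fA$, preserves static equilibrium: a force system $\{f_i\}_{i\in\mathcal{I}}$ satisfies $\sum_i f_i=0$ if and only if $\sum_i f_iA=0$. Every projective transformation of a statics problem can be described as the composition of a linear-map equivalence class $A_\sim=\{\lambda A:\lambda\neq 0\}$ acting on the forces and an equilibrium preserving congruence of the force system, and every such composition gives a projective transformation of the statics problem. (ii) Every invertible linear map $A:\mathcal{E}_p\to\mathcal{E}_p$ (resp. $\mathcal{E}_c\to\mathcal{E}_c$), $e\mapsto eA$, preserves compatibility. Every projective transformation of a kinematics problem can be described as the composition of a linear-map equivalence class acting on the velocities and a compatibility preserving congruence of the velocity system, and every such composition gives a projective transformation of the kinematics problem.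
   Context: Points of the real projective plane $PG(2)$ are classes of nonzero vectors of $\mathbb{R}^3$ up to nonzero scaling; a Euclidean point $\vec p\in\mathbb{R}^2$ is $(\vec p,1)$ and an ideal point in direction $\vec u$ is $(\vec u,0)$. Lines are also represented by nonzero vectors up to scaling, and point $p$ lies on line $l$ iff $\langle p,l\rangle=0$. A projective transformation of $PG(2)$ (map sending points to points, lines to lines, preserving incidence) is given by an invertible $3\times3$ matrix $P$ up to scaling, acting on points as $p\mapsto pP$ and on lines as $l\mapsto lP^{-T}$. Mechanical quantities (bodies lie in the $x,y$ plane): $\mathcal{F}_p$: a coplanar force with components $F_x,F_y$ and moment $M_z$ about the origin is $f=(-F_y,F_x,M_z)\in\mathbb{R}^3$; its line of action is the projective line $f$ (up to scaling). $\mathcal{F}_c$: a force orthogonal to the plane with $z$-component $F_z$ and moments $M_x,M_y$ about the coordinate axes is $f=(-M_y,M_x,F_z)$; it represents its point of action. $\mathcal{E}_c$: a planar rigid motion with velocity $(v_x,v_y)$ of the origin and angular velocity $\omega_z$ is $e=(-v_y,v_x,\omega_z)$, representing the point about which the body rotates. $\mathcal{E}_p$: a motion with $z$-velocity $v_z$ of the origin and angular velocity components $\omega_x,\omega_y$ is $e=(-\omega_y,\omega_x,v_z)$, representing the line about which the body rotates. A force system on a body is in static equilibrium iff the sum of its vectors is $0$. Compatibility conditions have the form $\langle l,e_j-e_k\rangle=0$ for a line $l$ (in $\mathcal{E}_c$) or $\langle p,e_j-e_k\rangle=0$ for a point $p$ (in $\mathcal{E}_p$), for velocities $e_j,e_k$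 of two bodies. A congruence of a force (resp. velocity) system $\{f_i\}$ is a map $\{f_i\}\mapsto\{\psi_if_i\}$ with all $\psi_i\in\mathbb{R}\setminus\{0\}$; it is equilibrium (resp. compatibility) preserving for a given problem if static equilibrium (resp. compatibility) of all (sub)bodies of the problem is preserved. A projective transformation of a statics (resp. kinematics) problem is a transformation of the structure into another one such that all points and lines of the structure, and the points and lines of action of the forces (resp. velocities), are transformed by one projective transformation of $PG(2)$, and the image is in static equilibrium (resp. compatible) if and only if the original is. *)

From HB Require Import structures.
From mathcomp Require Import all_boot all_order all_algebra.
From mathcomp Require Import reals.
Set Implicit Arguments. Unset Strict Implicit. Unset Printing Implicit Defensive.
Import Order.TTheory GRing.Theory Num.Theory.
Local Open Scope ring_scope.

Section Defs.
Variable R : realType.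

Definition dot (u v : 'rV[R]_3) : R := \sum_(i < 3) u 0 i * v 0 i.

Inductive kind := PointK | LineK.
Definition dual (k : kind) : kind :=
  match k with PointK => LineK | LineK => PointK end.

Definition act_mx (k : kind) (P : 'M[R]_3) : 'M[R]_3 :=
  match k with PointK => P | LineK => (invmx P)^T end.

Definition proj_img (M : 'M[R]_3) (u v : 'rV[R]_3) : Prop :=
  exists c : R, c != 0 /\ v = c *: (u *m M).

Definition in_class (M A : 'M[R]_3) : Prop :=
  exists lambda : R, lambda != 0 /\ A = lambda *: M.

Definition geom_mapped (Pt Ln : finType) (P : 'M[R]_3)
    (pts pts' : Pt -> 'rV[R]_3) (lns lns' : Ln -> 'rV[R]_3) : Prop :=
  (forall x, proj_img (act_mx PointK P) (pts x) (pts' x)) /\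
  (forall y, proj_img (act_mx LineK P) (lns y) (lns' y)).

Definition congruence (I : finType) (psi : I -> R) : Prop :=
  forall i, psi i != 0.
Definition cong (I : finType) (psi : I -> R) (f : I -> 'rV[R]_3) :
  I -> 'rV[R]_3 := fun i => psi i *: f i.

(* A statics problem: force system f indexed by a finite type I, and a list B
   of (sub)bodies, each given by the set of forces acting on it. *)
Definition equilibrium (I : finType) (B : seq {set I}) (f : I -> 'rV[R]_3)
  : Prop := forall S, S \in B -> \sum_(i in S) f i = 0.

Definition equil_preserving (I : finType) (B : seq {set I}) (psi : I -> R)
    (f : I -> 'rV[R]_3) : Prop :=
  congruence psi /\ (equilibrium B (cong psi f) <-> equilibrium B f).

(* Projective transformation (with matrix P) of the statics problem
   (pts, lns, B, f) into (pts', lns', B, g); forces are objects of kind k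
   (k = LineK for F_p, k = PointK for F_c). *)
Definition statics_ptransf (k : kind) (Pt Ln I : finType) (P : 'M[R]_3)
    (B : seq {set I})
    (pts pts' : Pt -> 'rV[R]_3) (lns lns' : Ln -> 'rV[R]_3)
    (f g : I -> 'rV[R]_3) : Prop :=
  [/\ P \in unitmx, geom_mapped P pts pts' lns lns',
      (forall i, proj_img (act_mx k P) (f i) (g i)) &
      (equilibrium B g <-> equilibrium B f)].

(* A kinematics problem: velocities e of bodies indexed by J, and compatibility
   conditions indexed by C: condition c reads <cl c, e_j - e_k> = 0 with
   (j, k) = cb c; cl c is a line (E_c) or a point (E_p) of the structure. *)
Definition compatible (J C : finType) (cl : C -> 'rV[R]_3) (cb : C -> J * J)
    (e : J -> 'rV[R]_3) : Prop :=
  forall c, dot (cl c) (e (cb c).1 - e (cb c).2) = 0.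

Definition compat_preserving (J C : finType) (cl : C -> 'rV[R]_3)
    (cb : C -> J * J) (psi : J -> R) (e : J -> 'rV[R]_3) : Prop :=
  congruence psi /\ (compatible cl cb (cong psi e) <-> compatible cl cb e).

(* Projective transformation (matrix P) of the kinematics problem; velocities
   are objects of kind k (k = PointK for E_c, k = LineK for E_p) and the
   condition elements cl are of the dual kind. *)
Definition kin_ptransf (k : kind) (Pt Ln J C : finType) (P : 'M[R]_3)
    (cb : C -> J * J)
    (pts pts' : Pt -> 'rV[R]_3) (lns lns' : Ln -> 'rV[R]_3)
    (cl cl' : C -> 'rV[R]_3) (e e' : J -> 'rV[R]_3) : Prop :=
  [/\ P \in unitmx, geom_mapped P pts pts' lns lns',
      (forall c, proj_img (act_mx (dual k) P) (cl c) (cl' c)),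
      (forall j, proj_img (act_mx k P) (e j) (e' j)) &
      (compatible cl' cb e' <-> compatible cl cb e)].

End Defs.

From HB Require Import structures.
From mathcomp Require Import all_boot all_order all_algebra.
From mathcomp Require Import reals.
Import Order.TTheory GRing.Theory Num.Theory.
Local Open Scope ring_scope.

(* Equilibrium and compatibility are linear conditions.  Multiplying forces on
   the right by an invertible A does not change whether their sums vanish, and
   if M N^T = a I with a != 0 (as for the line matrix P^-T and the point matrix
   P of one projective transformation, up to the scalar of the class) then
   every pairing <l M, e N> is a <l, e>.  A projective transformation sends
   each force or velocity to a nonzero multiple of its image under P or P^-T,
   which is exactly a linear map of the class followed by a congruence, so the
   conditions on the image reduce to those on the original problem. *)

Set Implicit Arguments.
Unset Strict Implicit.
Unset Printing Implicit Defensive.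

Section ProjectiveStatics.
Variable R : realType.
Implicit Types (M N A P : 'M[R]_3) (u v : 'rV[R]_3).

Lemma dotE u v : dot u v = (u *m v^T) 0 0.
Proof. by rewrite /dot mxE; apply: eq_bigr => i _; rewrite mxE. Qed.

Lemma dotZl a u v : dot (a *: u) v = a * dot u v.
Proof. by rewrite !dotE -scalemxAl !mxE. Qed.

Lemma dot_mulmx M N a u v :
  M *m N^T = a%:M -> dot (u *m M) (v *m N) = a * dot u v.
Proof.
move=> MN; rewrite !dotE trmx_mul mulmxA -(mulmxA u) MN.
by rewrite mul_mx_scalar -scalemxAl mxE.
Qed.

Lemma mulmx_unit_eq0 u A : A \in unitmx -> u *m A = 0 <-> u = 0.
Proof.
move=> Au; split=> [/eqP|->]; last exact: mul0mx.
by rewrite mulmx_free_eq0 ?row_free_unit // => /eqP.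
Qed.

Lemma in_class_refl M : in_class M M.
Proof. by exists 1; rewrite oner_eq0 scale1r. Qed.

Lemma in_class_unitmx M A : M \in unitmx -> in_class M A -> A \in unitmx.
Proof. by move=> Mu [l [l_neq0 ->]]; rewrite unitmxZ ?unitfE. Qed.

Lemma act_mx_unitmx k P : P \in unitmx -> act_mx k P \in unitmx.
Proof. by case: k => //= Pu; rewrite unitmx_tr unitmx_inv. Qed.

Lemma act_mx_dual k P : P \in unitmx ->
  act_mx (dual k) P *m (act_mx k P)^T = 1%:M.
Proof.
by case: k => /= Pu; [rewrite -trmx_mul mulmxV ?trmx1 | rewrite trmxK mulmxV].
Qed.

Lemma act_mx_dual_class k P A : P \in unitmx -> in_class (act_mx k P) A ->
  exists2 a : R, a != 0 & act_mx (dual k) P *m A^T = a%:M.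
Proof.
move=> Pu [a [a_neq0 ->]]; exists a => //.
by rewrite linearZ /= -scalemxAr act_mx_dual // scale_scalar_mx mulr1.
Qed.

Lemma proj_img_congruence (I : finType) M (f g : I -> 'rV[R]_3) :
  (forall i, proj_img M (f i) (g i)) ->
  exists2 psi : I -> R, congruence psi & g =1 cong psi (fun i => f i *m M).
Proof. by move=> /fin_all_exists [psi psiP]; exists psi => i; case: (psiP i). Qed.

Lemma proj_img_cong (I : finType) M A (psi : I -> R) (f : I -> 'rV[R]_3) :
  in_class M A -> congruence psi ->
  forall i, proj_img M (f i) (cong psi (fun i => f i *m A) i).
Proof.
move=> [l [l_neq0 ->]] psi_neq0 i; exists (psi i * l).
by rewrite mulf_neq0 ?psi_neq0 // /cong -scalemxAr scalerA.
Qed.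

Section Equilibrium.
Variables (I : finType) (B : seq {set I}).

Lemma eq_equilibrium (f g : I -> 'rV[R]_3) :
  f =1 g -> equilibrium B f <-> equilibrium B g.
Proof.
move=> fg; have sumE S : \sum_(i in S) f i = \sum_(i in S) g i.
  by apply: eq_bigr.
by split=> eqf S /eqf; rewrite sumE.
Qed.

Lemma equilibrium_mulmx A (f : I -> 'rV[R]_3) : A \in unitmx ->
  equilibrium B (fun i => f i *m A) <-> equilibrium B f.
Proof.
by move=> Au; split=> eqf S /eqf; rewrite -mulmx_suml mulmx_unit_eq0.
Qed.

Lemma equilibrium_class M A (f : I -> 'rV[R]_3) :
  M \in unitmx -> in_class M A ->
  equilibrium B (fun i => f i *m A) <-> equilibrium B f.
Proof. by move=> Mu /(in_class_unitmx Mu) /equilibrium_mulmx. Qed.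

End Equilibrium.

Section Compatibility.
Variables (J C : finType) (cb : C -> J * J).

Lemma eq_compatible (cl cl' : C -> 'rV[R]_3) (e e' : J -> 'rV[R]_3) :
  cl =1 cl' -> e =1 e' -> compatible cl cb e <-> compatible cl' cb e'.
Proof. by move=> clE eE; split=> ce c; have := ce c; rewrite !eE clE. Qed.

Lemma compatible_scale (d : C -> R) (cl : C -> 'rV[R]_3) (e : J -> 'rV[R]_3) :
  (forall c, d c != 0) ->
  compatible (fun c => d c *: cl c) cb e <-> compatible cl cb e.
Proof.
move=> d_neq0; have eq0E c v : (dot (d c *: cl c) v == 0) = (dot (cl c) v == 0).
  by rewrite dotZl mulrI_eq0 //; apply/lregP.
by split=> ce c; apply/eqP; move/eqP: (ce c); rewrite eq0E.
Qed.

Lemma compatible_mulmx M N (a : R) (cl : C -> 'rV[R]_3) (e : J -> 'rV[R]_3) :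
  a != 0 -> M *m N^T = a%:M ->
  compatible (fun c => cl c *m M) cb (fun j => e j *m N) <-> compatible cl cb e.
Proof.
move=> a_neq0 MN; have eq0E u v : (dot (u *m M) (v *m N) == 0) = (dot u v == 0).
  by rewrite (dot_mulmx _ _ MN) mulrI_eq0 //; apply/lregP.
by split=> ce c; apply/eqP; move/eqP: (ce c); rewrite -mulmxBl eq0E.
Qed.

Lemma compatible_act k P A (cl cl' : C -> 'rV[R]_3) (e : J -> 'rV[R]_3) :
  P \in unitmx -> in_class (act_mx k P) A ->
  (forall c, proj_img (act_mx (dual k) P) (cl c) (cl' c)) ->
  compatible cl' cb (fun j => e j *m A) <-> compatible cl cb e.
Proof.
move=> Pu PA /proj_img_congruence [d d_neq0 clE].
have [a a_neq0 PAt] := act_mx_dual_class Pu PA.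
rewrite (eq_compatible clE (frefl _)) compatible_scale //.
exact: compatible_mulmx PAt.
Qed.

End Compatibility.

Lemma sum_mulmx_unit_eq0 A : A \in unitmx ->
  forall (I : finType) (f : I -> 'rV[R]_3), \sum_i f i = 0 <-> \sum_i (f i *m A) = 0.
Proof. by move=> Au I f; rewrite -mulmx_suml mulmx_unit_eq0. Qed.

Lemma statics_ptransf_decompose k (Pt Ln I : finType) P (B : seq {set I})
    (pts pts' : Pt -> 'rV[R]_3) (lns lns' : Ln -> 'rV[R]_3)
    (f g : I -> 'rV[R]_3) :
  statics_ptransf k P B pts pts' lns lns' f g ->
  exists (A : 'M[R]_3) (psi : I -> R),
    [/\ in_class (act_mx k P) A, equil_preserving B psi (fun i => f i *m A) &
        forall i, g i = cong psi (fun i => f i *m A) i].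
Proof.
move=> [Pu _ /proj_img_congruence [psi psi_neq0 gE] eq_g].
exists (act_mx k P), psi; split; [exact: in_class_refl| split=> // | exact: gE].
rewrite -(eq_equilibrium _ gE) eq_g.
by rewrite equilibrium_mulmx ?act_mx_unitmx.
Qed.

Lemma statics_ptransf_compose k (Pt Ln I : finType) P A (B : seq {set I})
    (pts pts' : Pt -> 'rV[R]_3) (lns lns' : Ln -> 'rV[R]_3)
    (f : I -> 'rV[R]_3) (psi : I -> R) :
  P \in unitmx -> in_class (act_mx k P) A ->
  geom_mapped P pts pts' lns lns' ->
  equil_preserving B psi (fun i => f i *m A) ->
  statics_ptransf k P B pts pts' lns lns' f (cong psi (fun i => f i *m A)).
Proof.
move=> Pu PA geom [psi_neq0 eq_psi]; split=> //; first exact: proj_img_cong.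
by rewrite eq_psi (equilibrium_class _ _ (act_mx_unitmx k Pu) PA).
Qed.

Lemma compatible_mulmx_unit A : A \in unitmx ->
  forall (J C : finType) (cl : C -> 'rV[R]_3) (cb : C -> J * J)
         (e : J -> 'rV[R]_3),
  compatible cl cb e <->
  compatible (fun c => cl c *m (invmx A)^T) cb (fun j => e j *m A).
Proof.
move=> Au J C cl cb e; symmetry; apply: (compatible_mulmx _ _ _ (oner_neq0 R)).
by rewrite -trmx_mul mulmxV ?trmx1.
Qed.

Lemma kin_ptransf_decompose k (Pt Ln J C : finType) P (cb : C -> J * J)
    (pts pts' : Pt -> 'rV[R]_3) (lns lns' : Ln -> 'rV[R]_3)
    (cl cl' : C -> 'rV[R]_3) (e e' : J -> 'rV[R]_3) :
  kin_ptransf k P cb pts pts' lns lns' cl cl' e e' ->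
  exists (A : 'M[R]_3) (psi : J -> R),
    [/\ in_class (act_mx k P) A,
        compat_preserving cl' cb psi (fun j => e j *m A) &
        forall j, e' j = cong psi (fun j => e j *m A) j].
Proof.
move=> [Pu _ cl_img /proj_img_congruence [psi psi_neq0 eE] eq_e].
exists (act_mx k P), psi; split; [exact: in_class_refl| split=> // | exact: eE].
rewrite -(eq_compatible _ (frefl _) eE) eq_e.
by rewrite (compatible_act _ _ Pu (in_class_refl _) cl_img).
Qed.

Lemma kin_ptransf_compose k (Pt Ln J C : finType) P A (cb : C -> J * J)
    (pts pts' : Pt -> 'rV[R]_3) (lns lns' : Ln -> 'rV[R]_3)
    (cl cl' : C -> 'rV[R]_3) (e : J -> 'rV[R]_3) (psi : J -> R) :
  P \in unitmx -> in_class (act_mx k P) A ->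
  geom_mapped P pts pts' lns lns' ->
  (forall c, proj_img (act_mx (dual k) P) (cl c) (cl' c)) ->
  compat_preserving cl' cb psi (fun j => e j *m A) ->
  kin_ptransf k P cb pts pts' lns lns' cl cl' e (cong psi (fun j => e j *m A)).
Proof.
move=> Pu PA geom cl_img [psi_neq0 eq_psi]; split=> //.
  exact: proj_img_cong.
by rewrite eq_psi (compatible_act _ _ Pu PA cl_img).
Qed.

End ProjectiveStatics.

Theorem theorem3 (R : realType) :
  (* (i), first claim: invertible linear maps preserve static equilibrium *)
  (forall (A : 'M[R]_3), A \in unitmx ->
     forall (I : finType) (f : I -> 'rV[R]_3),
       \sum_(i : I) f i = 0 <-> \sum_(i : I) (f i *m A) = 0)
  /\
  (* (i), every projective transformation of a statics problem decomposes *)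
  (forall (k : kind) (Pt Ln I : finType) (P : 'M[R]_3) (B : seq {set I})
          (pts pts' : Pt -> 'rV[R]_3) (lns lns' : Ln -> 'rV[R]_3)
          (f g : I -> 'rV[R]_3),
     statics_ptransf k P B pts pts' lns lns' f g ->
     exists (A : 'M[R]_3) (psi : I -> R),
       [/\ in_class (act_mx k P) A,
           equil_preserving B psi (fun i => f i *m A) &
           forall i, g i = cong psi (fun i => f i *m A) i])
  /\
  (* (i), every such composition is a projective transformation *)
  (forall (k : kind) (Pt Ln I : finType) (P A : 'M[R]_3) (B : seq {set I})
          (pts pts' : Pt -> 'rV[R]_3) (lns lns' : Ln -> 'rV[R]_3)
          (f : I -> 'rV[R]_3) (psi : I -> R),
     P \in unitmx -> in_class (act_mx k P) A ->
     geom_mapped P pts pts' lns lns' ->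
     equil_preserving B psi (fun i => f i *m A) ->
     statics_ptransf k P B pts pts' lns lns' f (cong psi (fun i => f i *m A)))
  /\
  (* (ii), first claim: invertible linear maps preserve compatibility
     (the condition points/lines being transformed dually, l |-> l A^{-T}) *)
  (forall (A : 'M[R]_3), A \in unitmx ->
     forall (J C : finType) (cl : C -> 'rV[R]_3) (cb : C -> J * J)
            (e : J -> 'rV[R]_3),
       compatible cl cb e <->
       compatible (fun c => cl c *m (invmx A)^T) cb (fun j => e j *m A))
  /\
  (* (ii), every projective transformation of a kinematics problem decomposes *)
  (forall (k : kind) (Pt Ln J C : finType) (P : 'M[R]_3) (cb : C -> J * J)
          (pts pts' : Pt -> 'rV[R]_3) (lns lns' : Ln -> 'rV[R]_3)
          (cl cl' : C -> 'rV[R]_3) (e e' : J -> 'rV[R]_3),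
     kin_ptransf k P cb pts pts' lns lns' cl cl' e e' ->
     exists (A : 'M[R]_3) (psi : J -> R),
       [/\ in_class (act_mx k P) A,
           compat_preserving cl' cb psi (fun j => e j *m A) &
           forall j, e' j = cong psi (fun j => e j *m A) j])
  /\
  (* (ii), every such composition is a projective transformation *)
  (forall (k : kind) (Pt Ln J C : finType) (P A : 'M[R]_3) (cb : C -> J * J)
          (pts pts' : Pt -> 'rV[R]_3) (lns lns' : Ln -> 'rV[R]_3)
          (cl cl' : C -> 'rV[R]_3) (e : J -> 'rV[R]_3) (psi : J -> R),
     P \in unitmx -> in_class (act_mx k P) A ->
     geom_mapped P pts pts' lns lns' ->
     (forall c, proj_img (act_mx (dual k) P) (cl c) (cl' c)) ->
     compat_preserving cl' cb psi (fun j => e j *m A) ->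
     kin_ptransf k P cb pts pts' lns lns' cl cl'
       e (cong psi (fun j => e j *m A))).
Proof.
split; first exact: sum_mulmx_unit_eq0.
split; first exact: statics_ptransf_decompose.
split; first exact: statics_ptransf_compose.
split; first exact: compatible_mulmx_unit.
split; first exact: kin_ptransf_decompose.
exact: kin_ptransf_compose.
Qed.
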